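(* Let $m\ge7$ and $d\ge2$, and let $J$ be a set of jobs with size vectors $p_j\in\mathbb{R}^d_{\ge0}$ satisfying $p_{j,r}\in[0,1]$ for all $j\in J,r\in[d]$ and $\sum_{j\in J}p_{j,r}\le m\log d$ for all $r\in[d]$. Consider a random job set $S\subseteq J$ in which each job $j\in J$ is independently included with probability $q:=7/m$. Then with probability at least $1/2$, for all $r\in[d]$ we have $\sum_{j\in S}p_{j,r}\le14\log d$ and $\sum_{j\in J\setminus S}p_{j,r}\le(m-1)\log d$. *)

From HB Require Import structures.
From mathcomp Require Import all_boot all_order all_algebra.
From mathcomp Require Import reals exp.
Set Implicit Arguments. Unset Strict Implicit. Unset Printing Implicit Defensive.
Import Order.TTheory GRing.Theory Num.Theory.
Local Open Scope ring_scope.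

(* Probability that a random subset S of the finite job set T satisfies the
   event E, where each job is included independently with probability q
   (product Bernoulli(q) distribution on subsets):
     P[E] = sum_{S | E S} q^|S| (1-q)^(|T|-|S|). *)
Definition bernoulli_subset_prob (R : realType) (T : finType) (q : R)
  (E : pred {set T}) : R :=
  \sum_(S : {set T} | E S) q ^+ #|S| * (1 - q) ^+ (#|T| - #|S|).

From HB Require Import structures.
From mathcomp Require Import all_boot all_order all_algebra.
From mathcomp Require Import reals exp.
From mathcomp Require Import sequences convex interval_inference ring lra.
Set Implicit Arguments. Unset Strict Implicit. Unset Printing Implicit Defensive.
Import Order.TTheory GRing.Theory Num.Theory.
Local Open Scope ring_scope.

(* Exponential-moment (Chernoff) method plus a union bound.  Put L := ln d,
   X_r(S) := sum_(j in S) p j r and T_r := X_r(J).  Every bad S makes one of the 2d quantities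
     exp (2/3 (X_r(S) - 14 L)),   exp (2 ((T_r - X_r(S)) - (m-1) L))
   at least 1, so P[bad] is at most the sum of their expectations.  By
   independence and convexity of exp, E[exp (t X_r)] <= exp (q (e^t - 1) T_r),
   and with q T_r <= 7 L these expectations are at most d^(-5/2) and d^(-4).
   Summing over r gives d^(-3/2) + d^(-3) <= 2^(-3/2) + 1/8 < 1/2. *)

Section BernoulliSubset.
Variables (R : realType) (T : finType).

Definition subset_weight (q : R) (S : {set T}) : R :=
  q ^+ #|S| * (1 - q) ^+ (#|T| - #|S|).

Definition bernoulli_subset_expect (q : R) (g : {set T} -> R) : R :=
  \sum_(S : {set T}) subset_weight q S * g S.

Lemma eq_bernoulli_subset_expect (q : R) (g h : {set T} -> R) :
  (forall S, g S = h S) -> bernoulli_subset_expect q g = bernoulli_subset_expect q h.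
Proof. by move=> gh; apply: eq_bigr => S _; rewrite gh. Qed.

Lemma subset_weight_ge0 (q : R) (S : {set T}) :
  0 <= q <= 1 -> 0 <= subset_weight q S.
Proof. by case/andP=> q0 q1; rewrite mulr_ge0 // exprn_ge0 // subr_ge0. Qed.

Lemma bernoulli_subset_expect_prod (q : R) (f : T -> R) :
  bernoulli_subset_expect q (fun S => \prod_(j in S) f j) =
  \prod_(j : T) (1 - q + q * f j).
Proof.
rewrite (eq_bigr (fun j => q * f j + (1 - q))) => [|j _]; last by rewrite addrC.
rewrite bigA_distr; apply: eq_bigr => S _.
rewrite [RHS](bigID (mem S)) /=.
rewrite [X in _ = X * _](eq_bigr (fun j => q * f j)) => [|j ->] //.
rewrite [X in _ = _ * X](eq_bigr (fun=> 1 - q)) => [|j /negbTE ->] //.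
rewrite big_split prodr_const /= -(eq_bigl _ _ (fun j => in_setC j S)).
by rewrite prodr_const [#|~: S|]cardsCs setCK /subset_weight; ring.
Qed.

Lemma bernoulli_subset_expect1 (q : R) : bernoulli_subset_expect q (fun=> 1) = 1.
Proof.
have := bernoulli_subset_expect_prod q (fun=> 1).
rewrite mulr1 subrK big1_eq // => prod1; rewrite -[RHS]prod1.
by apply: eq_bigr => S _; rewrite big1_eq.
Qed.

Lemma bernoulli_subset_expectZl (q c : R) (g : {set T} -> R) :
  bernoulli_subset_expect q (fun S => c * g S) = c * bernoulli_subset_expect q g.
Proof. by rewrite mulr_sumr; apply: eq_bigr => S _; rewrite mulrCA. Qed.

Lemma bernoulli_subset_expect_sum (I : finType) (q : R) (f : I -> {set T} -> R) :
  bernoulli_subset_expect q (fun S => \sum_i f i S) =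
  \sum_i bernoulli_subset_expect q (f i).
Proof.
by rewrite exchange_big; apply: eq_bigr => S _; rewrite mulr_sumr.
Qed.

(* Markov's inequality for the indicator of the complement of E, combined with
   a union bound over the index type I. *)
Lemma bernoulli_subset_prob_ge (I : finType) (q : R) (f : I -> {set T} -> R)
    (E : pred {set T}) :
  0 <= q <= 1 -> (forall i S, 0 <= f i S) ->
  (forall S, ~~ E S -> exists i, 1 <= f i S) ->
  1 - \sum_i bernoulli_subset_expect q (f i) <= bernoulli_subset_prob q E.
Proof.
move=> q01 f0 Ebad; rewrite -bernoulli_subset_expect_sum.
set F := fun S => \sum_i f i S.
have bad_le S : ~~ E S -> subset_weight q S <= subset_weight q S * F S.
  case/Ebad=> i fi1; rewrite ler_peMr ?subset_weight_ge0 //.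
  by rewrite /F (bigD1 i) //= (le_trans fi1) // lerDl sumr_ge0.
have bad_sum : \sum_(S | ~~ E S) subset_weight q S
    <= \sum_(S | ~~ E S) subset_weight q S * F S := ler_sum _ bad_le.
have good_ge0 : 0 <= \sum_(S | E S) subset_weight q S * F S.
  by apply: sumr_ge0 => S _; rewrite mulr_ge0 ?subset_weight_ge0 ?sumr_ge0.
have := bernoulli_subset_expect1 q; rewrite /bernoulli_subset_expect.
under eq_bigr do rewrite mulr1.
rewrite (bigID E) [X in 1 - X](bigID E) /= => <-.
change (bernoulli_subset_prob q E) with (\sum_(S | E S) subset_weight q S); lra.
Qed.

Lemma expR_le_chord (a t : R) :
  0 <= a <= 1 -> expR (a * t) <= 1 + a * (expR t - 1).
Proof.
case/andP=> a0 a1; have := convex_expR (Itv01 a0 a1) t 0.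
by rewrite !convRE /= expR0 mulr0 mulr1 addr0 /unstable.onem => /le_trans->//; lra.
Qed.

Lemma bernoulli_subset_expect_expR_le (q t : R) (a : T -> R) :
  0 <= q <= 1 -> (forall j, 0 <= a j <= 1) ->
  bernoulli_subset_expect q (fun S => expR (t * \sum_(j in S) a j))
    <= expR (q * (expR t - 1) * \sum_j a j).
Proof.
move=> /andP[q0 q1] a01.
under eq_bernoulli_subset_expect do rewrite mulr_sumr expR_sum.
rewrite bernoulli_subset_expect_prod mulr_sumr expR_sum.
apply: ler_prod => j _; have e0 := expR_ge0 (t * a j).
have := expR_le_chord t (a01 j); rewrite mulrC => chord.
apply/andP; split; first nra.
apply: le_trans (expR_ge1Dx _).
have : q * expR (t * a j) <= q * (1 + a j * (expR t - 1)) by rewrite ler_wpM2l.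
lra.
Qed.

End BernoulliSubset.

Lemma expR_two_thirds_le (R : realType) : expR (2 / 3 : R) <= 461 / 235.
Proof.
have e_le : expR (1 / 48 : R) <= 48 / 47.
  have := expR_ge1Dx (- (1 / 48 : R)); have := expRxMexpNx_1 (1 / 48 : R).
  have := expR_gt0 (1 / 48 : R); nra.
have -> : (2 / 3 : R) = 32%:R * (1 / 48) by lra.
rewrite expRM_natl; apply: le_trans (_ : (48 / 47) ^+ 32 <= _); last by lra.
by apply: lerXn2r; rewrite // nnegrE ?expR_ge0 //; lra.
Qed.

Lemma expRN2_le (R : realType) : expR (-2 : R) <= 1 / 7.
Proof.
have e_ge : 33 / 32 <= expR (1 / 32 : R) by have := expR_ge1Dx (1 / 32 : R); lra.
have e2 : 7 <= expR (2 : R).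
  have -> : (2 : R) = 64%:R * (1 / 32) by lra.
  rewrite expRM_natl; apply: le_trans (_ : 7 <= (33 / 32) ^+ 64) _; first by lra.
  by apply: lerXn2r; rewrite // nnegrE; lra.
have := expRxMexpNx_1 (2 : R); have := expR_ge0 (-2 : R); nra.
Qed.

Lemma tail_sum_le_half (R : realType) (x : R) : 2 <= x ->
  x * (expR (- (5 / 2) * ln x) + expR (-4 * ln x)) <= 1 / 2.
Proof.
move=> x2; set L := ln x; have xL : expR L = x by rewrite lnK // posrE; lra.
set y := expR (- (3 / 2) * L); set z := expR (-4 * L).
have -> : x * (expR (- (5 / 2) * L) + z) = y + y ^+ 2.
  by rewrite -xL expr2 -!expRD mulrDr -!expRD; congr (expR _ + expR _); lra.
have y2 : y ^+ 2 * x ^+ 3 = 1.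
  by rewrite -xL -!expRM_natl -expRD -[RHS]expR0; congr expR; lra.
have x8 : 8 <= x ^+ 3 by rewrite !exprS expr0 mulr1; nra.
have y0 : 0 <= y by exact: expR_ge0.
have y2_le : y ^+ 2 <= 1 / 8 by rewrite expr2 in y2 *; nra.
by rewrite expr2 in y2_le *; nra.
Qed.

Lemma natr_div_in01 (R : realFieldType) (k m : nat) :
  (0 < m)%N -> (k <= m)%N -> 0 <= (k%:R / m%:R : R) <= 1.
Proof.
move=> m_gt0 km; rewrite divr_ge0 //= ler_pdivrMr ?ltr0n // mul1r.
by rewrite ler_nat.
Qed.

Section Tails.
Variables (R : realType) (J : finType) (m : nat) (L : R) (a : J -> R).
Hypothesis m_ge7 : (7 <= m)%N.
Hypothesis L_ge0 : 0 <= L.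
Hypothesis a01 : forall j, 0 <= a j <= 1.
Hypothesis load_le : \sum_j a j <= m%:R * L.

Let q := (7 / m%:R : R).

Let q01 : 0 <= q <= 1.
Proof. by rewrite natr_div_in01 // (leq_trans _ m_ge7). Qed.

Let mq : m%:R * q = 7.
Proof. by rewrite mulrC divfK // pnatr_eq0 -lt0n (leq_trans _ m_ge7). Qed.

Lemma upper_tail_expect_le :
  bernoulli_subset_expect q (fun S => expR (2 / 3 * (\sum_(j in S) a j - 14 * L)))
  <= expR (- (5 / 2) * L).
Proof.
under eq_bernoulli_subset_expect do rewrite mulrBr expRB mulrC.
rewrite bernoulli_subset_expectZl mulrC ler_pdivrMr ?expR_gt0 // -expRD.
apply: le_trans (bernoulli_subset_expect_expR_le _ q01 a01) _.
rewrite ler_expR -mulrA mulrCA.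
have e1 : 0 <= expR (2 / 3 : R) - 1 by have := expR_ge1Dx (2 / 3 : R); lra.
have load_mean_le : q * \sum_j a j <= 7 * L.
  by have := ler_wpM2l (proj1 (andP q01)) load_le; rewrite mulrA [q * _%:R]mulrC mq.
apply: le_trans (ler_wpM2l e1 load_mean_le) _.
have e23 : (expR (2 / 3) - 1) * 7 <= 41 / 6 :> R.
  by have := expR_two_thirds_le R; lra.
rewrite mulrA; apply: le_trans (ler_wpM2r L_ge0 e23) _; lra.
Qed.

Lemma lower_tail_expect_le :
  bernoulli_subset_expect q
    (fun S => expR (2 * (\sum_(j in ~: S) a j - (m - 1)%:R * L)))
  <= expR (-4 * L).
Proof.
set T := \sum_j a j.
have exponentE S : 2 * (\sum_(j in ~: S) a j - (m - 1)%:R * L) =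
    2 * (T - (m - 1)%:R * L) + -2 * \sum_(j in S) a j.
  rewrite /T [in RHS](bigID (mem S)) /= -(eq_bigl _ _ (fun j => in_setC j S)).
  ring.
under eq_bernoulli_subset_expect do rewrite exponentE expRD.
rewrite bernoulli_subset_expectZl mulrC -ler_pdivlMr ?expR_gt0 // -expRB.
apply: le_trans (bernoulli_subset_expect_expR_le _ q01 a01) _.
rewrite ler_expR natrB ?(leq_trans _ m_ge7) //.
have /andP[q0 q1] := q01; have e := expRN2_le R; have e0 := expR_ge0 (-2 : R).
have c0 : 0 <= 2 + q * (expR (-2) - 1) by nra.
have cmL : (2 + q * (expR (-2) - 1)) * (m%:R * L) =
    2 * (m%:R * L) + 7 * (expR (-2) * L) - 7 * L by rewrite -mq; ring.
have := ler_wpM2l c0 load_le; rewrite -/T cmL.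
have := ler_wpM2r L_ge0 e; lra.
Qed.

End Tails.

Theorem lemma6 (R : realType) (m d : nat) (J : finType) (p : J -> 'I_d -> R) :
  (7 <= m)%N -> (2 <= d)%N ->
  (forall (j : J) (r : 'I_d), 0 <= p j r <= 1) ->
  (forall r : 'I_d, \sum_(j : J) p j r <= m%:R * ln (d%:R : R)) ->
  (1 / 2 : R) <= bernoulli_subset_prob (7 / m%:R : R)
    (fun S : {set J} =>
       [forall r : 'I_d,
          (\sum_(j in S) p j r <= 14 * ln (d%:R : R)) &&
          (\sum_(j in ~: S) p j r <= (m - 1)%:R * ln (d%:R : R))]).
Proof.
move=> m_ge7 d_ge2 p01 load_le; set L := ln (d%:R : R).
have d2 : 2 <= d%:R :> R by rewrite (ler_nat R 2 d).
have L_ge0 : 0 <= L by rewrite ln_ge0 //; lra.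
pose tail (i : 'I_d + 'I_d) (S : {set J}) := match i with
  | inl r => expR (2 / 3 * (\sum_(j in S) p j r - 14 * L))
  | inr r => expR (2 * (\sum_(j in ~: S) p j r - (m - 1)%:R * L)) end.
have q01 := natr_div_in01 R (leq_trans (isT : (0 < 7)%N) m_ge7) m_ge7.
apply: le_trans (bernoulli_subset_prob_ge (f := tail) q01 _ _).
- have upper : \sum_(r < d) bernoulli_subset_expect (7 / m%:R) (tail (inl r))
      <= d%:R * expR (- (5 / 2) * L).
    apply: le_trans (ler_sum _ (fun r _ =>
      upper_tail_expect_le m_ge7 L_ge0 (p01^~ r) (load_le r))) _.
    by rewrite sumr_const card_ord -[_ *+ d]mulr_natl.
  have lower : \sum_(r < d) bernoulli_subset_expect (7 / m%:R) (tail (inr r))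
      <= d%:R * expR (-4 * L).
    apply: le_trans (ler_sum _ (fun r _ =>
      lower_tail_expect_le m_ge7 L_ge0 (p01^~ r) (load_le r))) _.
    by rewrite sumr_const card_ord -[_ *+ d]mulr_natl.
  have := tail_sum_le_half d2; rewrite -/L big_sumType /=.
  lra.
- by case=> r S; apply: expR_ge0.
move=> S /forallPn[r]; rewrite negb_and -!ltNge => /orP[X_gt|Y_gt].
- by exists (inl r); apply/ltW; rewrite expR_gt1 mulr_gt0 // subr_gt0.
- by exists (inr r); apply/ltW; rewrite expR_gt1 mulr_gt0 // subr_gt0.
Qed.
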